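(* In the setting of the context, let $X^{m,s}$ be a diffusion and suppose $u_{m,s}(x,\theta)$ is strictly supermodular and twice continuously differentiable. If $\psi_{m,s}$ is $u_{m,s}$-subdifferentiable, then the indifference index $\theta^*$ satisfies, at $x\in\mathrm{int}(I^m)$ (where $\psi_{m,s}$ is differentiable), $\psi_{m,s}'(x)=\frac{\partial}{\partial x}u_{m,s}(x,\theta^*(x))$. Moreover, $\theta^*$ is non-decreasing.
   Context: Fix $\rho>0$, an interval $\Theta$, a starting point $X_0$, a terminal reward $G(x,\theta)$ and a running reward $c(x)$. For a speed measure $m$ and a strictly increasing continuous scale function $s$, $X^{m,s}$ denotes the regular one-dimensional generalised diffusion with speed measure $m$ and scale $s$ on its state space $I^m$ started at $X_0$ (either both endpoints non-reflecting, or started at a reflecting endpoint with the other non-reflecting); $\mathrm{int}(I^m)$ is the interior plus accessible boundary points. $\varphi_{m,s}$ is the increasing positive solution of $\frac12\frac{d}{dm}\frac{d}{ds}f=\rho f$ with $\varphi_{m,s}(X_0)=1$, $\psi_{m,s}=\log\varphi_{m,s}$, $R_{m,s}(x)=\mathbb{E}_x[\int_0^\infty e^{-\rho t}c(X^{m,s}_t)dt]$, and $u_{m,s}(x,\theta)=\log(G(x,\theta)-R_{m,s}(x))$. For $f$ defined on $A$ and $u:A\times B\to\mathbb{R}$, the $u$-subdifferential of $f$ at $y$ is $\partial^uf(y)=\{z\in B:u(y,z)-f(y)\ge u(\hat y,z)-f(\hat y)\ \forall\hat y\in A\}$, and $f$ is $u$-subdifferentiable if $\partial^uf(y)\neq\emptyset$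 for all $y\in A$; here $A=\mathrm{int}(I^m)$, $B=\Theta$. Strict supermodularity of $u$: $u(y',z)-u(y,z)$ strictly increasing in $z$ for $y'>y$. The indifference index $\theta^*(x)$ is a parameter $\theta$ for which it is optimal to stop immediately when the diffusion starts at $x$, i.e. $\theta^*(x)\in\partial^{u_{m,s}}\psi_{m,s}(x)$ (so that $x$ maximises $x'\mapsto u_{m,s}(x',\theta)-\psi_{m,s}(x')$). *)

From Stdlib Require Import Reals.
From Coquelicot Require Import Coquelicot.
Open Scope R_scope.

Definition is_interval (A : R -> Prop) : Prop :=
  forall x y z, A x -> A z -> x <= y <= z -> A y.

Definition u_subdiff (A B : R -> Prop) (u : R -> R -> R) (f : R -> R)
  (y z : R) : Prop :=
  B z /\ forall yh, A yh -> u y z - f y >= u yh z - f yh.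

Definition u_subdifferentiable (A B : R -> Prop) (u : R -> R -> R) (f : R -> R)
  : Prop :=
  forall y, A y -> exists z, u_subdiff A B u f y z.

Definition strictly_supermodular (A B : R -> Prop) (u : R -> R -> R) : Prop :=
  forall y y', A y -> A y' -> y < y' ->
  forall z z', B z -> B z' -> z < z' ->
    u y' z - u y z < u y' z' - u y z'.

Definition cont2 (f : R -> R -> R) (x t : R) : Prop :=
  continuous (fun p : R * R => f (fst p) (snd p)) (x, t).

Definition C2_on (A B : R -> Prop) (u : R -> R -> R) : Prop :=
  exists ux ut uxx uxt utx utt : R -> R -> R,
  forall x t, A x -> B t ->
    is_derive (fun y => u y t) x (ux x t) /\
    is_derive (fun s => u x s) t (ut x t) /\
    is_derive (fun y => ux y t) x (uxx x t) /\
    is_derive (fun s => ux x s) t (uxt x t) /\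
    is_derive (fun y => ut y t) x (utx x t) /\
    is_derive (fun s => ut x s) t (utt x t) /\
    cont2 u x t /\ cont2 ux x t /\ cont2 ut x t /\
    cont2 uxx x t /\ cont2 uxt x t /\ cont2 utx x t /\ cont2 utt x t.

(* At the indifference index, x maximises x' |-> u(x', theta*(x)) - psi(x'), so at an
   interior point where both terms are differentiable the derivative of this difference
   vanishes (first-order condition).  Monotonicity is the usual Topkis argument: adding
   the two maximality inequalities for x < y with theta*(y) < theta*(x) contradicts
   strict supermodularity. *)
From Stdlib Require Import Reals Lra.
From Coquelicot Require Import Coquelicot.
Open Scope R_scope.

Lemma is_derive_local_max (g : R -> R) (x l : R) :
  is_derive g x l -> locally x (fun y => g y <= g x) -> l = 0.
Proof.
  intros Hg [eps Hmax].
  pose proof (proj1 (is_derive_Reals _ _ _) Hg) as Hg_reals.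
  assert (pr : derivable_pt g x) by (exists l; exact Hg_reals).
  rewrite <- (derive_pt_eq_0 g x l pr Hg_reals).
  apply (deriv_maximum g (x - eps) (x + eps) x pr);
    try (destruct eps; simpl; lra).
  intros y Hlo Hhi; apply Hmax.
  apply Rabs_def1; unfold minus, plus, opp; simpl; lra.
Qed.

Section USubdifferential.

Variables (A B : R -> Prop) (u : R -> R -> R) (f : R -> R).

Lemma u_subdiff_Derive (y z : R) :
  locally y A -> u_subdiff A B u f y z ->
  ex_derive f y -> ex_derive (fun x => u x z) y ->
  Derive f y = Derive (fun x => u x z) y.
Proof.
  intros HyA [_ Hmax] Hf Hu.
  assert (Hdiff : is_derive (fun x => u x z - f x) y
                   (Derive (fun x => u x z) y - Derive f y))
    by (apply (is_derive_minus (fun x => u x z) f); apply Derive_correct; assumption).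
  pose proof (is_derive_local_max _ _ _ Hdiff) as Hzero.
  enough (Derive (fun x => u x z) y - Derive f y = 0) by lra.
  apply Hzero; apply (filter_imp A); [|exact HyA].
  intros x Ax; specialize (Hmax x Ax); lra.
Qed.

Lemma u_subdiff_monotone (x y zx zy : R) :
  strictly_supermodular A B u -> A x -> A y -> x < y ->
  u_subdiff A B u f x zx -> u_subdiff A B u f y zy -> zx <= zy.
Proof.
  intros Hsm Ax Ay Hxy [Bzx Hx] [Bzy Hy].
  destruct (Rle_or_lt zx zy) as [Hle|Hlt]; [exact Hle|].
  specialize (Hx y Ay); specialize (Hy x Ax).
  specialize (Hsm x y Ax Ay Hxy zy zx Bzy Bzx Hlt); lra.
Qed.

End USubdifferential.

Theorem corollary4p8
  (A Th : R -> Prop) (psi : R -> R) (u : R -> R -> R) (theta_star : R -> R) :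
  is_interval A -> is_interval Th ->
  strictly_supermodular A Th u ->
  C2_on A Th u ->
  u_subdifferentiable A Th u psi ->
  (forall x, A x -> u_subdiff A Th u psi x (theta_star x)) ->
  (forall x, locally x A -> ex_derive psi x ->
     Derive psi x = Derive (fun y => u y (theta_star x)) x)
  /\
  (forall x y, A x -> A y -> x <= y -> theta_star x <= theta_star y).
Proof.
  intros _ _ Hsm [ux [ut [uxx [uxt [utx [utt HC2]]]]]] _ Htheta.
  split.
  - intros x HxA Hpsi.
    pose proof (locally_singleton _ _ HxA) as Ax.
    destruct (Htheta x Ax) as [Tx _].
    destruct (HC2 x (theta_star x) Ax Tx) as [Hux _].
    apply (u_subdiff_Derive A Th); auto.
    exists (ux x (theta_star x)); exact Hux.
  - intros x y Ax Ay Hxy.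
    destruct Hxy as [Hxy|<-]; [|apply Rle_refl].
    exact (u_subdiff_monotone A Th u psi x y _ _ Hsm Ax Ay Hxy
             (Htheta x Ax) (Htheta y Ay)).
Qed.
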